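(* Let $K$ be an algebraically closed field of characteristic $0$ and let $G=\mathrm{SL}(2,K)$, regarded as the affine variety $\{ad-bc=1\}\subset \mathbb{A}^4_{a,b,c,d}$. For every $n\ge 1$, every non-constant regular function $f$ on $G^n$ omits no values in $K$, i.e. $f(G^n)=K$. *)

From HB Require Import structures.
From mathcomp Require Import all_boot all_algebra all_field.
From mathcomp Require Import mpoly.
Set Implicit Arguments. Unset Strict Implicit. Unset Printing Implicit Defensive.
Import GRing.Theory.
Local Open Scope ring_scope.

(* A point of G^n = SL(2,K)^n is encoded as an n x 4 matrix X whose i-th row
   (X i 0, X i 1, X i 2, X i 3) = (a, b, c, d) satisfies a d - b c = 1. *)
Definition in_SL2n (K : comRingType) (n : nat) (X : 'M[K]_(n, 4)) : Prop :=
  forall i : 'I_n, X i 0 * X i 3 - X i 1 * X i 2 = 1.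

(* A regular function on the affine variety G^n ⊂ A^{4n} is the restriction of
   a polynomial in the 4n ambient coordinates; its value at X. *)
Definition regfun_eval (K : comRingType) (n : nat) (p : {mpoly K[n * 4]})
  (X : 'M[K]_(n, 4)) : K := p.@[fun k => (mxvec X) 0 k].

From HB Require Import structures.
From mathcomp Require Import all_boot all_algebra all_field.
From mathcomp Require Import mpoly.
From mathcomp Require Import ring.
Set Implicit Arguments. Unset Strict Implicit.
Import GRing.Theory.
Local Open Scope ring_scope.

(* Every element of SL(2,K) is a product L(u) U(s) L(w) U(r) of lower and
   upper unitriangular matrices, with u in {0, -1}.  Interpolating the four
   parameters of each factor linearly between those of two points X and Y of
   G^n gives a polynomial curve in G^n through X (at t = 0) and Y (at t = 1).
   Along this curve a regular function f is a polynomial in t taking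
   different values at 0 and 1, hence non-constant, hence it attains every
   value of the algebraically closed field K. *)

Lemma row4E (R : zmodType) n (M : 'M[R]_(n, 4)) i j :
  M i j = [:: M i 0; M i 1; M i 2; M i 3]`_j.
Proof.
by case: j => [[|[|[|[|j]]]] Hj] //=; congr (M i _); apply: val_inj.
Qed.

(* The entries (a, b, c, d) of L(u) U(s) L(w) U(r), where
   L(u) = [[1, 0], [u, 1]] and U(s) = [[1, s], [0, 1]]. *)
Definition unipotent_word (R : comRingType) (u s w r : R) : seq R :=
  [:: 1 + s * w; (1 + s * w) * r + s; u * (1 + s * w) + w;
      u * ((1 + s * w) * r + s) + w * r + 1].

Definition word_mx (R : comRingType) n (Q : 'M[R]_(n, 4)) : 'M[R]_(n, 4) :=
  \matrix_(i, j) (unipotent_word (Q i 0) (Q i 1) (Q i 2) (Q i 3))`_j.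

Lemma word_mx_SL2n (R : comRingType) n (Q : 'M[R]_(n, 4)) :
  in_SL2n (word_mx Q).
Proof. by move=> i; rewrite !mxE /=; ring. Qed.

Lemma map_word_mx (R S : comRingType) (f : {rmorphism R -> S}) n
    (Q : 'M[R]_(n, 4)) :
  map_mx f (word_mx Q) = word_mx (map_mx f Q).
Proof.
apply/matrixP => i j; rewrite !mxE.
by case: j => [[|[|[|[|j]]]] Hj] /=;
  rewrite ?nth_nil ?(rmorph0, rmorphD, rmorphM, rmorph1).
Qed.

(* The choice of u makes w = c - u a nonzero: u = -1 is needed when c = 0,
   since then a d = 1 forces a != 0. *)
Definition unipotent_params (K : fieldType) (a b c d : K) : seq K :=
  let u := if c == 0 then -1 else 0 in
  let w := c - u * a in
  [:: u; (a - 1) / w; w; (d - u * b - 1) / w].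

Lemma unipotent_paramsK (K : fieldType) (a b c d : K) : a * d - b * c = 1 ->
  let p := unipotent_params a b c d in
  unipotent_word p`_0 p`_1 p`_2 p`_3 = [:: a; b; c; d].
Proof.
rewrite /unipotent_params /=; set u := if c == 0 then _ else _; set w := c - _.
move=> det1.
have w_neq0 : w != 0.
  rewrite /w /u; have [c0|c_neq0] := eqVneq c 0; last by rewrite mul0r subr0.
  apply: contra_eq_neq det1; rewrite c0 mulN1r sub0r opprK => a0.
  by rewrite a0 !mul0r mulr0 subrr eq_sym oner_eq0.
have a_eq : 1 + (a - 1) / w * w = a by field.
have bw_eq : b * w = a * (d - u * b) - 1 by rewrite -det1 /w; ring.
have b_eq : (1 + (a - 1) / w * w) * ((d - u * b - 1) / w) + (a - 1) / w = b.
  by apply: (mulIf w_neq0); rewrite bw_eq; field.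
have d_eq : w * ((d - u * b - 1) / w) + 1 = d - u * b by field.
rewrite /unipotent_word /= b_eq a_eq; congr [:: _; _; _; _]; rewrite /w; first ring.
by rewrite -addrA d_eq; ring.
Qed.

Definition sl2_params (K : fieldType) n (X : 'M[K]_(n, 4)) : 'M[K]_(n, 4) :=
  \matrix_(i, j) (unipotent_params (X i 0) (X i 1) (X i 2) (X i 3))`_j.

Lemma word_mx_params (K : fieldType) n (X : 'M[K]_(n, 4)) :
  in_SL2n X -> word_mx (sl2_params X) = X.
Proof.
move=> SLX; apply/matrixP => i j; rewrite mxE !mxE unipotent_paramsK //.
by rewrite [RHS]row4E.
Qed.

Lemma closed_poly_onto (K : closedFieldType) (q : {poly K}) a b :
  q.[a] != q.[b] -> forall c, exists t, q.[t] = c.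
Proof.
move=> q_nonconst c.
have size_neq1 : size (q - c%:P) != 1.
  apply: contra q_nonconst => /size_poly1P [k _ qc_eq].
  by rewrite -[q](subrK c%:P) qc_eq !hornerE.
have [t /rootP] := closed_rootP _ size_neq1.
by rewrite !hornerE => /eqP; rewrite subr_eq0 => /eqP; exists t.
Qed.

Lemma horner_mmap_polyC (R : comRingType) k (v : 'I_k -> {poly R})
    (p : {mpoly R[k]}) t :
  (mmap (@polyC R) v p).[t] = p.@[fun i => (v i).[t]].
Proof.
rewrite /mmap mevalE horner_sum; apply: eq_bigr => m _.
rewrite hornerM hornerC /mmap1 horner_prod; congr (_ * _).
by apply: eq_bigr => i _; rewrite horner_exp.
Qed.

Lemma regfun_eval_map_horner (R : comRingType) n (p : {mpoly R[n * 4]})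
    (M : 'M[{poly R}]_(n, 4)) t :
  regfun_eval p (map_mx (horner_eval t) M) = (mmap (@polyC R) (mxvec M 0) p).[t].
Proof.
by rewrite horner_mmap_polyC /regfun_eval -map_mxvec; apply: meval_eq => k; rewrite mxE.
Qed.

Definition sl2_path (K : fieldType) n (X Y : 'M[K]_(n, 4)) : 'M[{poly K}]_(n, 4) :=
  word_mx (\matrix_(i, j) ((sl2_params X i j)%:P +
                           'X * (sl2_params Y i j - sl2_params X i j)%:P)).

Lemma sl2_path_eval (K : fieldType) n (X Y : 'M[K]_(n, 4)) t :
  map_mx (horner_eval t) (sl2_path X Y) =
  word_mx (sl2_params X + t *: (sl2_params Y - sl2_params X)).
Proof.
rewrite map_word_mx; congr word_mx; apply/matrixP => i j.
by rewrite !mxE /= horner_evalE !hornerE.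
Qed.

Theorem lemma2p1 (K : closedFieldType) (hK : [pchar K] =i pred0)
  (n : nat) (hn : (1 <= n)%N) (p : {mpoly K[n * 4]}) :
  (exists X Y : 'M[K]_(n, 4),
     [/\ in_SL2n X, in_SL2n Y & regfun_eval p X <> regfun_eval p Y]) ->
  forall c : K, exists X : 'M[K]_(n, 4), in_SL2n X /\ regfun_eval p X = c.
Proof.
move=> [X [Y [SLX SLY fX_neq_fY]]] c.
set A := sl2_params X; set B := sl2_params Y.
pose q := mmap (@polyC K) (mxvec (sl2_path X Y) 0) p.
have q_eval t : q.[t] = regfun_eval p (word_mx (A + t *: (B - A))).
  by rewrite -regfun_eval_map_horner sl2_path_eval.
have q_nonconst : q.[0] != q.[1].
  rewrite !q_eval scale0r addr0 scale1r addrC subrK.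
  by rewrite !word_mx_params //; apply/eqP.
have [t qt] := closed_poly_onto q_nonconst c.
by exists (word_mx (A + t *: (B - A))); split; [exact: word_mx_SL2n | rewrite -q_eval].
Qed.
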